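(* Let $F$ be a non-archimedean local field with ring of integers $\mathcal{O}$ and uniformizer $\varpi$, let $G=\mathrm{GL}_{2n}(F)$ with diagonal torus $T$, upper triangular Borel subgroup $B$ and Weyl group $W$ (the permutation matrices), and let $\Delta$ be the set of simple roots determined by $B$. Let $S,T'\subset\Delta$ and let $w\in W$ be such that $wT'>0$ and $w^{-1}S>0$. Then \[\operatorname{Levi}(w^{-1}P_{\Delta,S}w)\cap J_{\Delta,T'}=J_{w^{-1}S,\;T'\cap w^{-1}S}.\]
   Context: For sets $S,T$ of roots of $G$ with respect to the diagonal torus, $P_{S,T}$ denotes the subgroup of $G$ whose Lie algebra is $\mathfrak{p}_{S,T}=\mathfrak{t}\oplus\bigoplus_{\alpha}\mathfrak{g}_\alpha$, the sum being over all roots $\alpha$ lying in $\mathbb{Z}_{\geq 0}S-\mathbb{Z}_{\geq 0}T$ (i.e. expressible as a nonnegative integer combination of elements of $S$ minus a nonnegative integer combination of elements of $T$); here $\mathfrak{t}$ is the Lie algebra of the diagonal torus and $\mathfrak{g}_\alpha$ the root space. Thus $P_{\Delta,\emptyset}=B$, $P_{\Delta,\Delta}=G$, $P_{\Delta,S}$ is the standard parabolic subgroup associated with $S\subset\Delta$, and its Levi subgroup is $P_{S,S}$. One sets $J_{S,T}=\{g\in P_{S,S}(\mathcal{O}) : g \bmod \varpi\in P_{S,T}(\mathcal{O}/\varpi)\}$ (so $J_{\Delta,\emptyset}$ is the Iwahori subgroup and $J_{\Delta,\Delta}=\mathrm{GL}_{2n}(\mathcal{O})$). For a set $R$ of roots,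 $wR>0$ means $w$ maps every root in $R$ to a positive root. *)

From HB Require Import structures.
From mathcomp Require Import all_boot all_order all_algebra all_fingroup.
Set Implicit Arguments. Unset Strict Implicit. Unset Printing Implicit Defensive.
Import Order.TTheory GRing.Theory Num.Theory.
Local Open Scope ring_scope.

(* Non-archimedean local fields: complete discretely valued fields with    *)
(* finite residue field.  The valuation nv is only meaningful on nonzero   *)
(* elements (nv 0 = +oo by convention, handled by the predicates below).   *)
Record nonarch_local_field (F : fieldType) := NALF {
  nv : F -> int;
  nvM : forall x y : F, x != 0 -> y != 0 -> nv (x * y) = nv x + nv y;
  nvD : forall x y : F, x != 0 -> y != 0 -> x + y != 0 ->
          (nv x <= nv (x + y)) \/ (nv y <= nv (x + y));
  nv_discrete : exists p : F, p != 0 /\ nv p = 1;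
  nv_residue_finite : exists s : seq F, forall x : F,
      (x == 0) || (0 <= nv x) ->
      exists2 r, r \in s & (x == r) || (0 < nv (x - r));
  nv_complete : forall u : nat -> F,
      (forall k : int, exists N : nat, forall p q : nat, (N <= p)%N -> (N <= q)%N ->
          u p = u q \/ k <= nv (u p - u q)) ->
      exists l : F, forall k : int, exists N : nat, forall p : nat, (N <= p)%N ->
          u p = l \/ k <= nv (u p - l)
}.

Definition inO (F : fieldType) (V : nonarch_local_field F) (x : F) : Prop :=
  x = 0 \/ 0 <= nv V x.

Definition uniformizer (F : fieldType) (V : nonarch_local_field F) (pi : F) : Prop :=
  pi != 0 /\ nv V pi = 1.

(* x lies in the ideal pi O, i.e. x = 0 in O/pi *)
Definition in_piO (F : fieldType) (V : nonarch_local_field F) (pi x : F) : Prop :=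
  exists y : F, inO V y /\ x = pi * y.

(* Roots of GL_m w.r.t. the diagonal torus: e_i - e_j, encoded as (i,j),   *)
(* i != j.  rvec a is the character e_{a.1} - e_{a.2} in Z^m.              *)
Definition is_root (m : nat) (a : 'I_m * 'I_m) : bool := a.1 != a.2.

Definition rvec (m : nat) (a : 'I_m * 'I_m) (k : 'I_m) : int :=
  (k == a.1)%:R - (k == a.2)%:R.

Definition in_cone (m : nat) (S T : {set 'I_m * 'I_m}) (a : 'I_m * 'I_m) : Prop :=
  exists c d : 'I_m * 'I_m -> nat, forall k : 'I_m,
    rvec a k = \sum_(b in S) (c b)%:R * rvec b k - \sum_(b in T) (d b)%:R * rvec b k.

Definition simple_roots (m : nat) : {set 'I_m * 'I_m} :=
  [set a | val a.2 == (val a.1).+1].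

Definition pos_root (m : nat) (a : 'I_m * 'I_m) : bool := (val a.1 < val a.2)%N.

(* The Weyl element w attached to s : 'S_m is the permutation matrix perm_mx s
   (entries (perm_mx s) i j = (s i == j)).  Ad(w) sends the root space of
   (i,j) to that of (s^-1 i, s^-1 j); this is the action of w on roots. *)
Definition weyl_mx (F : fieldType) (m : nat) (s : 'S_m) : 'M[F]_m := perm_mx s.

Definition weyl_act (m : nat) (s : 'S_m) (a : 'I_m * 'I_m) : 'I_m * 'I_m :=
  ((s^-1)%g a.1, (s^-1)%g a.2).

Definition weyl_set (m : nat) (s : 'S_m) (R : {set 'I_m * 'I_m}) : {set 'I_m * 'I_m} :=
  [set weyl_act s a | a in R].

(* F-points of P_{S,T}: invertible matrices supported on t + sum of the
   root spaces g_a with a in Z_{>=0}S - Z_{>=0}T. *)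
Definition in_P_F (F : fieldType) (m : nat) (S T : {set 'I_m * 'I_m})
  (g : 'M[F]_m) : Prop :=
  g \in unitmx /\
  forall i j : 'I_m, i != j -> ~ in_cone S T (i, j) -> g i j = 0.

(* Levi(w^{-1} P_{Delta,S} w) (Levi containing the diagonal torus):
   the conjugate w^{-1} P_{S,S} w of the standard Levi P_{S,S}. *)
Definition Levi_conj_parabolic (F : fieldType) (m : nat) (s : 'S_m)
  (S : {set 'I_m * 'I_m}) (g : 'M[F]_m) : Prop :=
  exists p : 'M[F]_m, in_P_F S S p /\
    g = invmx (weyl_mx F s) *m p *m weyl_mx F s.

(* J_{S,T} = { g in P_{S,S}(O) : g mod pi in P_{S,T}(O/pi) } *)
Definition J_ST (F : fieldType) (V : nonarch_local_field F) (pi : F) (m : nat)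
  (S T : {set 'I_m * 'I_m}) (g : 'M[F]_m) : Prop :=
  [/\ (forall i j : 'I_m, inO V (g i j)),
      (\det g != 0 /\ inO V (\det g) /\ inO V (\det g)^-1),
      (forall i j : 'I_m, i != j -> ~ in_cone S S (i, j) -> g i j = 0)
    & (forall i j : 'I_m, i != j -> ~ in_cone S T (i, j) -> in_piO V pi (g i j))].

From HB Require Import structures.
From mathcomp Require Import all_boot all_order all_algebra all_fingroup.
From mathcomp Require Import ring zify.
From Stdlib Require Import Classical.
Import Order.TTheory GRing.Theory Num.Theory.
Local Open Scope ring_scope.

Set Implicit Arguments. Unset Strict Implicit. Unset Printing Implicit Defensive.

(* For sets X, Y of simple roots, (i, j) lies in Z_{>=0} X - Z_{>=0} Y iff the
   simple roots between i and j lie in X when i < j, and in Y when j < i;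
   necessity follows by pairing with the fundamental coweights, and only needs
   the roots of X to be positive.  Conjugating by w turns the cone of w^{-1}S
   into that of S.  On a segment of S-roots, w is increasing because
   w^{-1}S > 0, and w^{-1} is increasing on the image segment because wT' > 0;
   hence w maps consecutive indices to consecutive indices, so the T'-condition
   read on either side of w is the same. *)

Section RootCones.
Variable m : nat.
Implicit Types (X Y : {set 'I_m * 'I_m}) (a b : 'I_m * 'I_m) (x y z : 'I_m).

Lemma rvec_split x y z k : rvec (x, z) k = rvec (x, y) k + rvec (y, z) k.
Proof. rewrite /rvec /=; ring. Qed.

Lemma rvec_swap a k : rvec (a.2, a.1) k = - rvec a k.
Proof. rewrite /rvec /=; ring. Qed.

Lemma rvec_pairing (f : 'I_m -> int) b : \sum_k f k * rvec b k = f b.1 - f b.2.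
Proof.
rewrite /rvec; under eq_bigr do rewrite mulrBr.
rewrite sumrB (bigD1 b.1) //= eqxx mulr1 big1 ?addr0 => [|k /negbTE ->]; last first.
  by rewrite mulr0.
rewrite (bigD1 b.2) //= eqxx mulr1 big1 ?addr0 // => k /negbTE ->.
by rewrite mulr0.
Qed.

Lemma in_cone_refl X Y x : in_cone X Y (x, x).
Proof.
exists (fun _ => 0%N), (fun _ => 0%N) => k.
by rewrite /rvec /= subrr !big1 ?subrr // => b _; rewrite mul0r.
Qed.

Lemma in_cone_trans X Y x y z :
  in_cone X Y (x, y) -> in_cone X Y (y, z) -> in_cone X Y (x, z).
Proof.
move=> [c1 [d1 E1]] [c2 [d2 E2]].
exists (fun b => c1 b + c2 b)%N, (fun b => d1 b + d2 b)%N => k.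
have sumD A (e1 e2 : 'I_m * 'I_m -> nat) : \sum_(b in A) (e1 b + e2 b)%:R * rvec b k
    = \sum_(b in A) (e1 b)%:R * rvec b k + \sum_(b in A) (e2 b)%:R * rvec b k.
  by rewrite -big_split; apply: eq_bigr => b _; rewrite natrD mulrDl.
rewrite (rvec_split _ y) E1 E2 !sumD; ring.
Qed.

Lemma in_cone_mem X Y b : b \in X -> in_cone X Y b.
Proof.
move=> bX; exists (fun b' => (b' == b : nat)), (fun _ => 0%N) => k.
rewrite [X in _ - X]big1 => [|? _]; last by rewrite mul0r.
rewrite subr0 (bigD1 b) //= eqxx mul1r big1 ?addr0 // => b' /andP [_ /negbTE ->].
by rewrite mul0r.
Qed.

Lemma in_cone_swap X Y a : in_cone X Y a -> in_cone Y X (a.2, a.1).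
Proof. by move=> [c [d E]]; exists d, c => k; rewrite rvec_swap E opprB. Qed.

Lemma in_cone_sub X Y X' Y' a :
  X \subset X' -> Y \subset Y' -> in_cone X Y a -> in_cone X' Y' a.
Proof.
move=> sXX' sYY' [c [d E]].
exists (fun b => if b \in X then c b else 0%N), (fun b => if b \in Y then d b else 0%N).
move=> k; rewrite E; congr (_ - _).
  rewrite [RHS](big_setID X) /= (setIidPr sXX') [X in _ + X]big1 ?addr0 => [|b].
    by apply: eq_bigr => b ->.
  by rewrite inE => /andP [/negbTE -> _]; rewrite mul0r.
rewrite [RHS](big_setID Y) /= (setIidPr sYY') [X in _ + X]big1 ?addr0 => [|b].
  by apply: eq_bigr => b ->.
by rewrite inE => /andP [/negbTE -> _]; rewrite mul0r.
Qed.

Lemma in_cone_sep X Y a (f : 'I_m -> int) :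
  (forall b, b \in X -> f b.2 <= f b.1) ->
  (forall b, b \in Y -> f b.1 <= f b.2) ->
  in_cone X Y a -> f a.2 <= f a.1.
Proof.
move=> fX fY [c [d E]].
have := rvec_pairing f a.
under eq_bigr do rewrite E mulrBr !mulr_sumr.
rewrite sumrB exchange_big [X in _ - X = _]exchange_big /= => Ea.
rewrite -subr_ge0 -Ea subr_ge0 (@le_trans _ _ 0) //.
  rewrite sumr_le0 // => b bY; under eq_bigr do rewrite mulrCA.
  rewrite -mulr_sumr rvec_pairing mulr_ge0_le0 // subr_le0; exact: fY.
rewrite sumr_ge0 // => b bX; under eq_bigr do rewrite mulrCA.
rewrite -mulr_sumr rvec_pairing mulr_ge0 // subr_ge0; exact: fX.
Qed.

Lemma weyl_actK (t : 'S_m) : cancel (weyl_act t) (weyl_act t^-1).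
Proof. by case=> x y; rewrite /weyl_act /= invgK !permKV. Qed.

Lemma weyl_setK (t : 'S_m) : cancel (weyl_set t) (weyl_set t^-1).
Proof.
move=> X; rewrite /weyl_set -imset_comp (eq_imset (g := id)) ?imset_id //.
exact: weyl_actK.
Qed.

Lemma in_cone_weyl_act (t : 'S_m) X Y a :
  in_cone X Y a -> in_cone (weyl_set t X) (weyl_set t Y) (weyl_act t a).
Proof.
have rvec_act b k : rvec (weyl_act t b) k = rvec b (t k).
  have act_eq x : (k == (t^-1)%g x) = (t k == x).
    by apply/eqP/eqP => [->|<-]; rewrite ?permKV ?permK.
  by rewrite /rvec /weyl_act /= !act_eq.
move=> [c [d E]].
exists (fun b => c (weyl_act t^-1 b)), (fun b => d (weyl_act t^-1 b)) => k.
have inj A : {in A &, injective (weyl_act t)} := in2W (can_inj (weyl_actK t)).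
rewrite /weyl_set !big_imset ?inj //= rvec_act E.
by congr (_ - _); apply: eq_bigr => b _; rewrite weyl_actK rvec_act.
Qed.

Lemma in_cone_weyl (t : 'S_m) X Y a :
  in_cone (weyl_set t X) (weyl_set t Y) (weyl_act t a) <-> in_cone X Y a.
Proof.
split=> [|]; last exact: in_cone_weyl_act.
by move/(in_cone_weyl_act t^-1); rewrite !weyl_setK weyl_actK.
Qed.

End RootCones.

Definition simple_seg_in m (X : {set 'I_m * 'I_m}) (p q : nat) : Prop :=
  forall b, b \in simple_roots m -> (p <= b.1)%N -> (b.2 <= q)%N -> b \in X.

Section SimpleSegments.
Variable m : nat.
Implicit Types (X Y : {set 'I_m * 'I_m}) (b : 'I_m * 'I_m).

Lemma simple_rootP b : reflect (b.2 = b.1.+1 :> nat) (b \in simple_roots m).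
Proof. by rewrite inE; apply: eqP. Qed.

Lemma simple_pos b : b \in simple_roots m -> pos_root b.
Proof. by case: b => [x y] /simple_rootP /=; rewrite /pos_root /= => ->. Qed.

Lemma simple_seg_ind (R : 'I_m -> 'I_m -> Prop) (p q : nat) :
  (forall x, R x x) -> (forall x y z, R x y -> R y z -> R x z) ->
  (forall b, b \in simple_roots m -> (p <= b.1)%N -> (b.2 <= q)%N -> R b.1 b.2) ->
  forall x y : 'I_m, (p <= x)%N -> (x <= y)%N -> (y <= q)%N -> R x y.
Proof.
move=> Rxx Rtr Rb x y px xy yq.
suff: forall k (z : 'I_m), (z : nat) = (x + k)%N -> (z <= q)%N -> R x z.
  by move=> /(_ (y - x)%N y); apply=> //; rewrite subnKC.
elim=> [|k IHk] z zE zq; first by rewrite (_ : z = x) //; apply: ord_inj; rewrite zE addn0.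
have zm : (x + k < m)%N by rewrite (leq_trans _ (ltn_ord z)) // zE addnS.
apply: (Rtr _ (Ordinal zm)); first by apply: IHk => //=; lia.
by apply: (Rb (Ordinal zm, z)) => /=; [apply/simple_rootP => /=; lia | lia | lia].
Qed.

Lemma in_cone_of_simple_seg X Y (i j : 'I_m) :
  simple_seg_in X i j -> simple_seg_in Y j i -> in_cone X Y (i, j).
Proof.
have cone_seg X' Y' (x y : 'I_m) : (x <= y)%N -> simple_seg_in X' x y -> in_cone X' Y' (x, y).
  move=> xy segX.
  apply: (simple_seg_ind (R := fun x y => in_cone X' Y' (x, y)) (p := x) (q := y)) => //.
  - by move=> ?; apply: in_cone_refl.
  - by move=> ? ? ?; apply: in_cone_trans.
  by move=> [b1 b2] bD xb bq; apply/in_cone_mem/segX.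
move=> segX segY; have [ij | ji] := leqP i j; first exact: cone_seg.
by apply: (in_cone_swap (a := (j, i))); apply: cone_seg => //; apply: ltnW.
Qed.

Lemma simple_seg_of_in_cone X Y (i j : 'I_m) :
  {in X, forall b, pos_root b} -> Y \subset simple_roots m ->
  in_cone X Y (i, j) -> simple_seg_in Y j i.
Proof.
move=> Xpos YD cij [k k'] /simple_rootP /= k'E jk k'i; apply: contraT => kY.
pose f (x : 'I_m) : int := (x <= k)%N%:R.
have f_anti (x y : 'I_m) : ((y <= k)%N -> (x <= k)%N) -> f y <= f x.
  by rewrite /f ler_nat; case: (y <= k)%N => // ->.
have ik : (i <= k)%N = false by apply/negbTE; rewrite -ltnNge; lia.
suff: f j <= f i by rewrite /f ler_nat jk ik.
apply: (in_cone_sep _ _ cij) => -[c c'] /=.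
  by move/Xpos; rewrite /pos_root /= => cc'; apply: f_anti; lia.
move=> cY; have /simple_rootP /= c'E := subsetP YD _ cY.
suff : (c : nat) != k by move=> ?; apply: f_anti; lia.
apply: contraNneq kY => ck; suff -> : (k, k') = (c, c') by [].
by congr pair; apply: ord_inj; lia.
Qed.

Lemma simple_seg_increasing X (f : 'I_m -> nat) (p q : nat) :
  simple_seg_in X p q -> {in X, forall b, f b.1 < f b.2}%N ->
  forall x y : 'I_m, (p <= x)%N -> (x <= y)%N -> (y <= q)%N -> (f x + (y - x) <= f y)%N.
Proof.
move=> segX fX x y px xy yq.
suff: (x <= y)%N && (f x + (y - x) <= f y)%N by case/andP.
apply: (simple_seg_ind (R := fun x y => (x <= y)%N && (f x + (y - x) <= f y)%N) _ _ _ px xy yq).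
- by move=> z; rewrite leqnn subnn addn0 leqnn.
- by move=> ? ? ? /andP [? ?] /andP [? ?]; apply/andP; lia.
move=> b /[dup] /simple_rootP b2E bD pb bq.
by have := fX b (segX b bD pb bq); rewrite b2E; lia.
Qed.

End SimpleSegments.

Section LeviCones.
Variable m : nat.
Variables (S T : {set 'I_m * 'I_m}) (s : 'S_m).
Hypotheses (SD : S \subset simple_roots m) (TD : T \subset simple_roots m).
Hypothesis sT_pos : forall a, a \in T -> pos_root (weyl_act s a).
Hypothesis sS_pos : forall a, a \in S -> pos_root (weyl_act s^-1 a).

Local Notation D := (simple_roots m).
Local Notation S' := (weyl_set s^-1 S).

Lemma weyl_S_pos : {in S', forall b, pos_root b}.
Proof. by move=> _ /imsetP [a aS ->]; apply: sS_pos. Qed.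

Lemma simple_seg_weyl (x y : 'I_m) :
  simple_seg_in S x y -> simple_seg_in T (s x) (s y) ->
  simple_seg_in [set b in S | weyl_act s^-1 b \in T] x y.
Proof.
move=> segS segT [k k'] /[dup] kD /simple_rootP /= k'E xk k'y.
have kS := segS _ kD xk k'y; rewrite inE kS /weyl_act invgK /=.
have sS_inc : {in S, forall a, s a.1 < s a.2}%N.
  by move=> a /sS_pos; rewrite /pos_root /weyl_act invgK.
have incS := simple_seg_increasing (f := fun z => val (s z)) segS sS_inc.
have incT := simple_seg_increasing (f := fun z => val ((s^-1)%g z)) segT sT_pos.
have := sS_pos kS; rewrite /pos_root /weyl_act invgK /= => skk'.
have sxk : (s x + (k - x) <= s k)%N by apply: incS; lia.
have sk'y : (s k' + (y - k') <= s y)%N by apply: incS; lia.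
have sxy : (x + (s y - s x) <= y)%N.
  by have := incT (s x) (s y); rewrite !permK; apply; lia.
by apply: segT => /=; [apply/simple_rootP => /= | |]; lia.
Qed.

Lemma in_cone_Levi_J (i j : 'I_m) :
  in_cone S' (T :&: S') (i, j) <-> in_cone S' S' (i, j) /\ in_cone D T (i, j).
Proof.
split=> [cij | [cS' cT]].
  split; first exact: in_cone_sub (subsetIr _ _) cij.
  have TS'D : T :&: S' \subset D by apply: subset_trans (subsetIl _ _) TD.
  apply: in_cone_of_simple_seg => [// | b bD jb bi].
  by have := simple_seg_of_in_cone weyl_S_pos TS'D cij bD jb bi; rewrite inE => /andP [].
have ijE : (i, j) = weyl_act s^-1 ((s^-1)%g i, (s^-1)%g j) by rewrite /weyl_act invgK !permKV.
rewrite ijE in cS' *; move/in_cone_weyl in cS'.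
have Spos : {in S, forall b, pos_root b} by move=> b /(subsetP SD) /simple_pos.
have segS := simple_seg_of_in_cone Spos SD cS'.
have segT := simple_seg_of_in_cone (@simple_pos m) TD cT.
set Y := [set b in S | weyl_act s^-1 b \in T].
have cY : in_cone S Y ((s^-1)%g i, (s^-1)%g j).
  apply: in_cone_of_simple_seg; first exact: simple_seg_of_in_cone Spos SD (in_cone_swap cS').
  by apply: simple_seg_weyl segS _; rewrite !permKV.
apply: in_cone_sub (in_cone_weyl_act (s^-1)%g cY) => //.
by apply/subsetP => c /imsetP [a]; rewrite inE => /andP [aS aT] ->; rewrite inE aT imset_f.
Qed.

End LeviCones.

Lemma in_cone_simple_roots m (i j : 'I_m) : in_cone (simple_roots m) (simple_roots m) (i, j).
Proof. by apply: in_cone_of_simple_seg. Qed.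

Lemma in_piO0 (F : fieldType) (V : nonarch_local_field F) (pi : F) : in_piO V pi 0.
Proof. by exists 0; split; [left | rewrite mulr0]. Qed.

Lemma perm_mx_conjE (R : ringType) m (t : 'S_m) (A : 'M[R]_m) i j :
  (perm_mx t^-1 *m A *m perm_mx t) i j = A ((t^-1)%g i) ((t^-1)%g j).
Proof. by rewrite -row_permE -[t in perm_mx t]invgK -col_permE !mxE. Qed.

Lemma invmx_perm (R : comUnitRingType) m (t : 'S_m) :
  invmx (perm_mx t : 'M[R]_m) = perm_mx t^-1.
Proof.
have tt' : (perm_mx t *m perm_mx t^-1 : 'M[R]_m) = 1%:M by rewrite -perm_mxM mulgV perm_mx1.
by rewrite -[RHS](mulKmx (unitmx_perm _ t)) tt' mulmx1.
Qed.

Lemma Levi_conj_parabolicP (F : fieldType) m (S : {set 'I_m * 'I_m}) (s : 'S_m)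
    (g : 'M[F]_m) :
  Levi_conj_parabolic s S g <->
  g \in unitmx /\ forall i j : 'I_m, i != j ->
    ~ in_cone (weyl_set (s^-1)%g S) (weyl_set (s^-1)%g S) (i, j) -> g i j = 0.
Proof.
have coneE (i j : 'I_m) : in_cone (weyl_set (s^-1)%g S) (weyl_set (s^-1)%g S) (i, j)
    <-> in_cone S S ((s^-1)%g i, (s^-1)%g j).
  have -> : (i, j) = weyl_act (s^-1)%g ((s^-1)%g i, (s^-1)%g j).
    by rewrite /weyl_act invgK !permKV.
  exact: in_cone_weyl.
split=> [[p [[pU p0] ->]] | [gU g0]].
  rewrite /weyl_mx invmx_perm; split=> [|i j ij].
    by rewrite !unitmx_mul !unitmx_perm pU.
  rewrite perm_mx_conjE coneE => ncone; apply: p0 ncone.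
  by rewrite (inj_eq perm_inj).
exists (perm_mx s *m g *m perm_mx s^-1); split; last first.
  rewrite /weyl_mx invmx_perm !mulmxA -perm_mxM mulVg perm_mx1 mul1mx.
  by rewrite -mulmxA -perm_mxM mulVg perm_mx1 mulmx1.
split=> [|i j ij ncone]; first by rewrite !unitmx_mul !unitmx_perm gU.
rewrite -{1}(invgK s) perm_mx_conjE invgK g0 ?(inj_eq perm_inj) // coneE.
by rewrite !permK.
Qed.

Theorem lemma1p1 (F : fieldType) (V : nonarch_local_field F) (pi : F) (n : nat)
  (S T' : {set 'I_(n.*2) * 'I_(n.*2)}) (s : 'S_(n.*2)) :
  uniformizer V pi ->
  S \subset simple_roots (n.*2) ->
  T' \subset simple_roots (n.*2) ->
  (forall a, a \in T' -> pos_root (weyl_act s a)) ->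
  (forall a, a \in S -> pos_root (weyl_act (s^-1)%g a)) ->
  forall g : 'M[F]_(n.*2),
    (Levi_conj_parabolic s S g /\ J_ST V pi (simple_roots (n.*2)) T' g) <->
    J_ST V pi (weyl_set (s^-1)%g S) (T' :&: weyl_set (s^-1)%g S) g.
Proof.
move=> _ SD TD sT_pos sS_pos g.
have coneE i j := in_cone_Levi_J SD TD sT_pos sS_pos i j.
rewrite Levi_conj_parabolicP.
split=> [[[gU g0] [gO gdet _ gpi]] | [gO gdet g0 gpi]].
  split=> // i j ij ncone.
  have [cS'|ncS'] := classic (in_cone (weyl_set (s^-1)%g S) (weyl_set (s^-1)%g S) (i, j));
    last by rewrite g0 //; apply: in_piO0.
  by apply: gpi => // cT; apply/ncone/coneE.
split; [split | split] => // [|i j ij ncone | i j ij ncone].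
- by rewrite unitmxE unitfE; case: gdet.
- by case: ncone; apply: in_cone_simple_roots.
have [cS'|ncS'] := classic (in_cone (weyl_set (s^-1)%g S) (weyl_set (s^-1)%g S) (i, j));
  last by rewrite g0 //; apply: in_piO0.
by apply: gpi => // /coneE [_ cT]; apply: ncone.
Qed.
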